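(* Let $\mathcal{C}$ be a bicomplete category with splitting coproducts and disjoint coproducts. Then every cofibration $c:A\to B$ of the generalized core model structure on $\mathcal{C}$ is isomorphic (as an object under $A$) to a canonical coproduct inclusion $i_1:A\to A\sqcup X$ for some object $X$; i.e. there is an isomorphism $\phi:B\to A\sqcup X$ with $\phi c=i_1$.
   Context: Bicomplete means having all finite limits and finite colimits. The generalized core model structure on $\mathcal{C}$ has weak equivalences the morphisms $f:A\to B$ for which some morphism $B\to A$ exists, cofibrations the morphisms having the left lifting property against all retractions (morphisms $r$ with $rs=1$ for some $s$), and fibrations the morphisms having the right lifting property against all cofibrations that are weak equivalences. Splitting coproducts: every $f:X\to A\sqcup B$ is isomorphic to $f_L\sqcup f_R$ for some $f_L:X_L\to A$, $f_R:X_R\to B$ with $X\cong X_L\sqcup X_R$. Disjoint coproducts: coproduct injections are monic, the pullback of $i_1:A\to A\sqcup B$ and $i_2:B\to A\sqcup B$ is the initial object, and the pullback of $i_1$ along itself (resp. $i_2$ along itself) is $A$ (resp. $B$) with identity maps. *)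

Set Implicit Arguments.
Unset Strict Implicit.

Record Category := {
  Ob :> Type;
  Hom : Ob -> Ob -> Type;
  comp : forall a b c : Ob, Hom b c -> Hom a b -> Hom a c;
  idm : forall a : Ob, Hom a a;
  comp_assoc : forall (a b c d : Ob) (f : Hom a b) (g : Hom b c) (h : Hom c d),
      comp h (comp g f) = comp (comp h g) f;
  comp_id_l : forall (a b : Ob) (f : Hom a b), comp (idm b) f = f;
  comp_id_r : forall (a b : Ob) (f : Hom a b), comp f (idm a) = f
}.

Arguments Hom {c} _ _ : rename.
Arguments comp {c0 a b c} _ _ : rename.
Arguments idm {c} _ : rename.

Section Notions.
Variable C : Category.

Definition IsIso (a b : C) (f : Hom a b) : Prop :=
  exists g : Hom b a, comp g f = idm a /\ comp f g = idm b.

Definition Monic (a b : C) (f : Hom a b) : Prop :=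
  forall (z : C) (g h : Hom z a), comp f g = comp f h -> g = h.

Definition Retraction (a b : C) (r : Hom a b) : Prop :=
  exists s : Hom b a, comp r s = idm b.

Definition LLP (a b x y : C) (i : Hom a b) (p : Hom x y) : Prop :=
  forall (u : Hom a x) (v : Hom b y), comp p u = comp v i ->
    exists h : Hom b x, comp h i = u /\ comp p h = v.

Definition CoreCofibration (a b : C) (c : Hom a b) : Prop :=
  forall (x y : C) (r : Hom x y), Retraction r -> LLP c r.

Definition IsInitial (i : C) : Prop :=
  forall x : C, exists f : Hom i x, forall g : Hom i x, g = f.

Definition IsTerminal (t : C) : Prop :=
  forall x : C, exists f : Hom x t, forall g : Hom x t, g = f.

Definition IsCoproduct (a b s : C) (i1 : Hom a s) (i2 : Hom b s) : Prop :=
  forall (z : C) (f : Hom a z) (g : Hom b z),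
    exists h : Hom s z, comp h i1 = f /\ comp h i2 = g /\
      forall h' : Hom s z, comp h' i1 = f -> comp h' i2 = g -> h' = h.

Definition IsProduct (a b p : C) (p1 : Hom p a) (p2 : Hom p b) : Prop :=
  forall (z : C) (f : Hom z a) (g : Hom z b),
    exists h : Hom z p, comp p1 h = f /\ comp p2 h = g /\
      forall h' : Hom z p, comp p1 h' = f -> comp p2 h' = g -> h' = h.

Definition IsEqualizer (a b e : C) (f g : Hom a b) (m : Hom e a) : Prop :=
  comp f m = comp g m /\
  forall (z : C) (k : Hom z a), comp f k = comp g k ->
    exists h : Hom z e, comp m h = k /\ forall h' : Hom z e, comp m h' = k -> h' = h.

Definition IsCoequalizer (a b q : C) (f g : Hom a b) (m : Hom b q) : Prop :=
  comp m f = comp m g /\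
  forall (z : C) (k : Hom b z), comp k f = comp k g ->
    exists h : Hom q z, comp h m = k /\ forall h' : Hom q z, comp h' m = k -> h' = h.

Definition IsPullback (a b s p : C) (f : Hom a s) (g : Hom b s)
    (q1 : Hom p a) (q2 : Hom p b) : Prop :=
  comp f q1 = comp g q2 /\
  forall (z : C) (u : Hom z a) (v : Hom z b), comp f u = comp g v ->
    exists h : Hom z p, comp q1 h = u /\ comp q2 h = v /\
      forall h' : Hom z p, comp q1 h' = u -> comp q2 h' = v -> h' = h.

Definition HasFiniteLimits : Prop :=
  (exists t : C, IsTerminal t) /\
  (forall a b : C, exists (p : C) (p1 : Hom p a) (p2 : Hom p b), IsProduct p1 p2) /\
  (forall (a b : C) (f g : Hom a b), exists (e : C) (m : Hom e a), IsEqualizer f g m).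

Definition HasFiniteColimits : Prop :=
  (exists i : C, IsInitial i) /\
  (forall a b : C, exists (s : C) (i1 : Hom a s) (i2 : Hom b s), IsCoproduct i1 i2) /\
  (forall (a b : C) (f g : Hom a b), exists (q : C) (m : Hom b q), IsCoequalizer f g m).

Definition Bicomplete : Prop := HasFiniteLimits /\ HasFiniteColimits.

(* Splitting coproducts: every f : X -> A ⊔ B is isomorphic (over A ⊔ B)
   to f_L ⊔ f_R : X_L ⊔ X_R -> A ⊔ B. *)
Definition SplittingCoproducts : Prop :=
  forall (a b s : C) (i1 : Hom a s) (i2 : Hom b s), IsCoproduct i1 i2 ->
  forall (x : C) (f : Hom x s),
    exists (xl xr p : C) (fl : Hom xl a) (fr : Hom xr b)
           (j1 : Hom xl p) (j2 : Hom xr p) (theta : Hom p x),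
      IsCoproduct j1 j2 /\ IsIso theta /\
      comp f (comp theta j1) = comp i1 fl /\
      comp f (comp theta j2) = comp i2 fr.

Definition DisjointCoproducts : Prop :=
  forall (a b s : C) (i1 : Hom a s) (i2 : Hom b s), IsCoproduct i1 i2 ->
    Monic i1 /\ Monic i2 /\
    (forall (p : C) (q1 : Hom p a) (q2 : Hom p b), IsPullback i1 i2 q1 q2 -> IsInitial p) /\
    IsPullback i1 i1 (idm a) (idm a) /\
    IsPullback i2 i2 (idm b) (idm b).

End Notions.


(* Let c : A -> B be a core cofibration and r = [c, 1] : A + B -> B.  Since
   r j2 = 1, r is a retraction, so lifting c against r gives h : B -> A + B
   with h c = j1 and r h = 1.  Splitting h along A + B decomposes B as
   X_l + X_r with h restricted to X_l landing in A (via f_l) and h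
   restricted to X_r landing in B.  The part of c landing in X_r is trivial:
   any monic u : Z -> A sending Z into X_r makes j1 u factor through j2, so
   by disjointness Z is initial.  Splitting c along X_l + X_r then shows
   that c factors through X_l by some g, and the equations h c = j1,
   r h = 1 make g and f_l mutually inverse.  Hence (c, X_r) is a coproduct
   diagram isomorphic to B. *)

Section CategoryFacts.
Context {C : Category}.

Lemma iso_monic {a b : C} {f : Hom a b} : IsIso f -> Monic f.
Proof.
  intros [g [Hgf _]] z u v E.
  rewrite <- (comp_id_l u), <- (comp_id_l v), <- Hgf, <- !comp_assoc, E.
  reflexivity.
Qed.

Lemma iso_comp {a b d : C} {f : Hom a b} {g : Hom b d} :
  IsIso f -> IsIso g -> IsIso (comp g f).
Proof.
  intros [f' [Hf1 Hf2]] [g' [Hg1 Hg2]]. exists (comp f' g'). split.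
  - rewrite comp_assoc, <- (comp_assoc g g' f'), Hg1, comp_id_r. exact Hf1.
  - rewrite comp_assoc, <- (comp_assoc f' f g), Hf2, comp_id_r. exact Hg2.
Qed.

Lemma monic_comp {a b d : C} {f : Hom a b} {g : Hom b d} :
  Monic f -> Monic g -> Monic (comp g f).
Proof.
  intros Hf Hg z u v E. apply Hf, Hg. rewrite !comp_assoc. exact E.
Qed.

Lemma monic_cancel {a b d : C} {f : Hom a b} {g : Hom b d} :
  Monic (comp g f) -> Monic f.
Proof.
  intros H z u v E. apply H. rewrite <- !comp_assoc, E. reflexivity.
Qed.

Lemma initial_maps_unique {i x : C} (f g : Hom i x) : IsInitial i -> f = g.
Proof.
  intros Hi. destruct (Hi x) as [k Hk]. rewrite (Hk f), (Hk g). reflexivity.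
Qed.

(* An object with a monomorphism into an initial object is itself initial;
   this is what replaces strictness of the initial object below. *)
Lemma monic_into_initial {x e : C} {w : Hom x e} :
  Monic w -> IsInitial e -> IsInitial x.
Proof.
  intros Mw He. destruct (He x) as [t _].
  assert (Htw : comp t w = idm x).
  { apply Mw. rewrite comp_assoc, comp_id_r,
      (initial_maps_unique (comp w t) (idm e) He), comp_id_l.
    reflexivity. }
  intros z. destruct (He z) as [k _]. exists (comp k w). intros f.
  rewrite <- (comp_id_r f), <- Htw, comp_assoc,
    (initial_maps_unique (comp f t) k He).
  reflexivity.
Qed.

Lemma coproduct_ext {a b s : C} {i1 : Hom a s} {i2 : Hom b s} :
  IsCoproduct i1 i2 -> forall (z : C) (h k : Hom s z),
  comp h i1 = comp k i1 -> comp h i2 = comp k i2 -> h = k.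
Proof.
  intros Hc z h k E1 E2.
  destruct (Hc z (comp k i1) (comp k i2)) as [m [_ [_ U]]].
  rewrite (U h E1 E2). symmetry. apply U; reflexivity.
Qed.

Lemma coproduct_initial_summand_iso {a b s : C} {i1 : Hom a s} {i2 : Hom b s} :
  IsCoproduct i1 i2 -> IsInitial b -> IsIso i1.
Proof.
  intros Hs Hb. destruct (Hb a) as [k _].
  destruct (Hs a (idm a) k) as [q [Hq1 _]].
  exists q. split; [exact Hq1|].
  apply (coproduct_ext Hs).
  - rewrite <- comp_assoc, Hq1, comp_id_l, comp_id_r. reflexivity.
  - apply (initial_maps_unique _ _ Hb).
Qed.

Lemma coproduct_precomp_iso {a xl xr p : C} {k1 : Hom xl p} {k2 : Hom xr p}
    {g : Hom a xl} :
  IsCoproduct k1 k2 -> IsIso g -> IsCoproduct (comp k1 g) k2.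
Proof.
  intros Hp [g' [Hg1 Hg2]] z f1 f2.
  destruct (Hp z (comp f1 g') f2) as [m [M1 [M2 MU]]].
  exists m. split; [|split; [exact M2|]].
  - rewrite comp_assoc, M1, <- comp_assoc, Hg1, comp_id_r. reflexivity.
  - intros h' H1 H2. apply MU; [|exact H2].
    rewrite <- H1, <- (comp_id_r (comp h' k1)), <- Hg2, !comp_assoc.
    reflexivity.
Qed.

Lemma pullback_from_limits {a b s : C} (f : Hom a s) (g : Hom b s) :
  HasFiniteLimits C ->
  exists (p : C) (q1 : Hom p a) (q2 : Hom p b), IsPullback f g q1 q2.
Proof.
  intros [_ [Hprod Heq]].
  destruct (Hprod a b) as [pr [p1 [p2 Hpr]]].
  destruct (Heq _ _ (comp f p1) (comp g p2)) as [e [m [Hm Hmu]]].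
  exists e, (comp p1 m), (comp p2 m). split.
  { rewrite !comp_assoc. exact Hm. }
  intros z u v Euv.
  destruct (Hpr z u v) as [k [K1 [K2 KU]]].
  destruct (Hmu z k) as [h [Hh HU]].
  { rewrite <- !comp_assoc, K1, K2. exact Euv. }
  exists h. rewrite <- !comp_assoc, Hh. split; [exact K1|split; [exact K2|]].
  intros h' H1 H2. apply HU. apply KU; rewrite comp_assoc; assumption.
Qed.

Lemma disjoint_monic_meet_initial {a b s z : C} {j1 : Hom a s} {j2 : Hom b s}
    {u : Hom z a} {v : Hom z b} :
  HasFiniteLimits C -> DisjointCoproducts C -> IsCoproduct j1 j2 ->
  Monic u -> comp j1 u = comp j2 v -> IsInitial z.
Proof.
  intros Hlim Hdisj Hs Mu E.
  destruct (pullback_from_limits j1 j2 Hlim) as [p [q1 [q2 Hpb]]].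
  destruct (Hdisj _ _ _ _ _ Hs) as [_ [_ [Hmeet _]]].
  destruct (proj2 Hpb z u v E) as [w [Hw _]].
  apply (monic_into_initial (w := w)); [|exact (Hmeet _ _ _ Hpb)].
  apply (monic_cancel (g := q1)). rewrite Hw. exact Mu.
Qed.

Lemma lift_separates_summands {a b s y z : C} {j1 : Hom a s} {j2 : Hom b s}
    {c : Hom a b} {h : Hom b s} {n : Hom y b} {f : Hom y b}
    {u : Hom z a} {v : Hom z y} :
  HasFiniteLimits C -> DisjointCoproducts C -> IsCoproduct j1 j2 ->
  comp h c = j1 -> comp h n = comp j2 f ->
  Monic u -> comp c u = comp n v -> IsInitial z.
Proof.
  intros Hlim Hdisj Hs Hhc Hhn Mu E.
  apply (disjoint_monic_meet_initial (v := comp f v) Hlim Hdisj Hs Mu).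
  rewrite <- Hhc, <- comp_assoc, E, comp_assoc, Hhn, comp_assoc. reflexivity.
Qed.

Lemma factor_through_first_summand {a xl xr p : C} {k1 : Hom xl p}
    {k2 : Hom xr p} {d : Hom a p} :
  SplittingCoproducts C -> DisjointCoproducts C -> IsCoproduct k1 k2 ->
  (forall (z : C) (u : Hom z a) (v : Hom z xr),
      Monic u -> comp d u = comp k2 v -> IsInitial z) ->
  exists g : Hom a xl, comp k1 g = d.
Proof.
  intros Hsplit Hdisj Hp Htriv.
  destruct (Hsplit _ _ _ _ _ Hp _ d) as
    [al [ar [q [gl [gr [m1 [m2 [ps [Hq [Hps [F1 F2]]]]]]]]]]].
  destruct (Hdisj _ _ _ _ _ Hq) as [_ [Mm2 _]].
  assert (Har : IsInitial ar).
  { apply (Htriv _ _ _ (monic_comp Mm2 (iso_monic Hps)) F2). }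
  destruct (iso_comp (coproduct_initial_summand_iso Hq Har) Hps)
    as [v [_ Hv]].
  exists (comp gl v).
  rewrite comp_assoc, <- F1, <- comp_assoc, Hv, comp_id_r. reflexivity.
Qed.

Lemma retract_comparison_iso {a b s x : C} {j1 : Hom a s} {c : Hom a b}
    {r : Hom s b} {h : Hom b s} {m : Hom x b} {f : Hom x a} {g : Hom a x} :
  Monic j1 -> Monic m ->
  comp r j1 = c -> comp h c = j1 -> comp r h = idm b ->
  comp h m = comp j1 f -> comp m g = c -> IsIso g.
Proof.
  intros Mj1 Mm Hrj1 Hhc Hrh Hhm Hmg. exists f. split.
  - apply Mj1. rewrite comp_id_r, comp_assoc, <- Hhm, <- comp_assoc, Hmg.
    exact Hhc.
  - apply Mm. rewrite comp_id_r, comp_assoc, Hmg, <- Hrj1, <- comp_assoc,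
      <- Hhm, comp_assoc, Hrh, comp_id_l.
    reflexivity.
Qed.

(* A core cofibration c : A -> B admits a section h of r = [c, 1] with
   h c = j1: lift c against the retraction r. *)
Lemma cofibration_section {a b s : C} {c : Hom a b} {j1 : Hom a s}
    {j2 : Hom b s} :
  CoreCofibration c -> IsCoproduct j1 j2 ->
  exists (r : Hom s b) (h : Hom b s),
    comp r j1 = c /\ comp h c = j1 /\ comp r h = idm b.
Proof.
  intros Hc Hs. destruct (Hs b c (idm b)) as [r [Hr1 [Hr2 _]]].
  destruct (Hc _ _ r (ex_intro _ j2 Hr2) j1 (idm b)) as [h [Hh1 Hh2]].
  { rewrite Hr1, comp_id_l. reflexivity. }
  exists r, h. auto.
Qed.

End CategoryFacts.

Theorem proposition5 (C : Category)
    (Hbic : Bicomplete C) (Hsplit : SplittingCoproducts C) (Hdisj : DisjointCoproducts C)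
    (a b : C) (c : Hom a b) (Hc : CoreCofibration c) :
  exists (x s : C) (i1 : Hom a s) (i2 : Hom x s) (phi : Hom b s),
    IsCoproduct i1 i2 /\ IsIso phi /\ comp phi c = i1.
Proof.
  destruct Hbic as [Hlim [_ [Hcop _]]].
  destruct (Hcop a b) as [s [j1 [j2 Hs]]].
  destruct (Hdisj _ _ _ _ _ Hs) as [Mj1 _].
  destruct (cofibration_section Hc Hs) as [r [h [Hrj1 [Hhc Hrh]]]].
  destruct (Hsplit _ _ _ _ _ Hs _ h) as
    [xl [xr [p [fl [fr [k1 [k2 [th [Hp [Hth [Hl Hr]]]]]]]]]]].
  pose proof (iso_monic Hth) as Mth.
  destruct Hth as [thi [Hthi Hthi']].
  assert (Htriv : forall (z : C) (u : Hom z a) (v : Hom z xr),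
             Monic u -> comp (comp thi c) u = comp k2 v -> IsInitial z).
  { intros z u v Mu E. apply (lift_separates_summands (v := v) Hlim Hdisj Hs Hhc Hr Mu).
    rewrite <- (comp_id_l c), <- Hthi', <- !comp_assoc, (comp_assoc u c thi), E.
    reflexivity. }
  destruct (factor_through_first_summand Hsplit Hdisj Hp Htriv) as [g Hg].
  assert (Hthg : comp (comp th k1) g = c).
  { rewrite <- comp_assoc, Hg, comp_assoc, Hthi', comp_id_l. reflexivity. }
  pose proof (retract_comparison_iso Mj1
    (monic_comp (proj1 (Hdisj _ _ _ _ _ Hp)) Mth) Hrj1 Hhc Hrh Hl Hthg)
    as Hg_iso.
  exists xr, p, (comp k1 g), k2, thi. split; [|split].
  - exact (coproduct_precomp_iso Hp Hg_iso).
  - exists th. split; assumption.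
  - symmetry. exact Hg.
Qed.
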